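(* (Gillett's conjecture.) Let $m=3$ and $n\ge1$, and let $k=\lfloor n/2\rfloor$. For every probability vector $p=(p_1,\dots,p_6)$ on the six rankings, $$P(3,n;p)\;\ge\;3\Bigl(1-B\bigl(k;n,\tfrac13\bigr)\Bigr)=3n\binom{n-1}{k}\int_0^{1/3}t^k(1-t)^{n-k-1}\,dt,$$ with equality when $p_1=p_4=p_5=\frac13$, $p_2=p_3=p_6=0$ (and also when $p_2=p_3=p_6=\frac13$, $p_1=p_4=p_5=0$). Hence these distributions minimize the probability of a Condorcet winner.
   Context: Three candidates $C_1,C_2,C_3$ and six rankings with probabilities $p_1$ ($C_1C_2C_3$), $p_2$ ($C_1C_3C_2$), $p_3$ ($C_2C_1C_3$), $p_4$ ($C_2C_3C_1$), $p_5$ ($C_3C_1C_2$), $p_6$ ($C_3C_2C_1$), listed best to worst. $n$ voters independently choose rankings with these probabilities. A candidate is a Condorcet winner if, for every other candidate, strictly more than $n/2$ voters rank it above that candidate. $P(3,n;p)$ is the probability that a Condorcet winner exists. $B(k;n,q)=\sum_{j=0}^{k}\binom nj q^j(1-q)^{n-j}$ is the binomial cumulative distribution function. *)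

From HB Require Import structures.
From mathcomp Require Import all_boot all_order all_algebra.
From mathcomp Require Import all_classical all_reals all_analysis.
Set Implicit Arguments. Unset Strict Implicit. Unset Printing Implicit Defensive.
Import Order.TTheory GRing.Theory Num.Theory.
Local Open Scope ring_scope.

(* Candidates C_1,C_2,C_3 are 'I_3 (C_j = index j-1).
   Rankings are 'I_6, ranking r = index (k-1) corresponds to p_k:
   p_1: C1C2C3, p_2: C1C3C2, p_3: C2C1C3, p_4: C2C3C1, p_5: C3C1C2, p_6: C3C2C1
   (best to worst). *)
Definition ranking_list (r : 'I_6) : seq nat :=
  match val r with
  | 0 => [:: 0; 1; 2]
  | 1 => [:: 0; 2; 1]
  | 2 => [:: 1; 0; 2]
  | 3 => [:: 1; 2; 0]
  | 4 => [:: 2; 0; 1]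
  | _ => [:: 2; 1; 0]
  end%N.

Definition prefers (r : 'I_6) (a b : 'I_3) : bool :=
  (index (val a) (ranking_list r) < index (val b) (ranking_list r))%N.

Definition condorcet_winner (n : nat) (prof : {ffun 'I_n -> 'I_6}) (c : 'I_3) : bool :=
  [forall d : 'I_3, (d != c) ==>
     (n < 2 * #|[set i : 'I_n | prefers (prof i) c d]|)%N].

Definition has_condorcet_winner (n : nat) (prof : {ffun 'I_n -> 'I_6}) : bool :=
  [exists c : 'I_3, condorcet_winner prof c].

(* P(3,n;p): n voters choose rankings independently with probabilities p *)
Definition PCW (R : realType) (n : nat) (p : 'I_6 -> R) : R :=
  \sum_(prof : {ffun 'I_n -> 'I_6} | has_condorcet_winner prof)
     \prod_(i < n) p (prof i).

Definition is_prob_vector (R : realType) (p : 'I_6 -> R) : Prop :=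
  (forall r, 0 <= p r) /\ \sum_(r < 6) p r = 1.

Definition binomB (R : realType) (k n : nat) (q : R) : R :=
  \sum_(j < k.+1) ('C(n, j))%:R * q ^+ j * (1 - q) ^+ (n - j).

Definition p_cyc1 (R : realType) (r : 'I_6) : R :=
  if (val r \in [:: 0; 3; 4]%N) then 3^-1 else 0.
Definition p_cyc2 (R : realType) (r : 'I_6) : R :=
  if (val r \in [:: 1; 2; 5]%N) then 3^-1 else 0.

From HB Require Import structures.
From mathcomp Require Import all_boot all_order all_algebra.
From mathcomp Require Import all_classical all_reals all_analysis.
From mathcomp Require Import ring lra zify.
Set Implicit Arguments. Unset Strict Implicit. Unset Printing Implicit Defensive.
Import Order.TTheory GRing.Theory Num.Theory.
Import numFieldNormedType.Exports.
Local Open Scope ring_scope.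

(* A candidate ranked first by a strict majority of the voters is a Condorcet
   winner, and at most one candidate is so ranked.  Hence P(3,n;p) is at least
   the sum over c of Q(t_c), where t_c is the probability that a voter ranks c
   first and Q(t) = 1 - B(k;n,t) is the probability of a strict majority among
   n Bernoulli(t) trials.  For the two cyclic distributions the bound is exact,
   since c beats its cyclic predecessor (resp. successor) only through voters
   ranking c first, and then t_c = 1/3 for every c.

   It remains to minimise Q(a) + Q(b) + Q(c) subject to a + b + c = 1.  Here
   Q'(t) = C t^k (1 - t)^m with m <= k, which is increasing on [0, 1/2]; so Q is
   convex there and, with a the largest of the three numbers,
   Q(b) + Q(c) >= 2 Q((1 - a)/2) >= 3 Q(1/3) - Q(a).  The integral formula is the
   fundamental theorem of calculus for Q. *)

(* The rankings are listed in pairs sharing their top candidate. *)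
Definition ranks_first (r : 'I_6) (c : 'I_3) : bool := ((val r)./2 == val c)%N.

Lemma ranks_first_prefers r c d : d != c -> ranks_first r c -> prefers r c d.
Proof.
by case: r => [[|[|[|[|[|[|?]]]]]] ?] //; case: c => [[|[|[|?]]] ?] //;
  case: d => [[|[|[|?]]] ?].
Qed.

Lemma ranks_first_inj r c1 c2 : ranks_first r c1 -> ranks_first r c2 -> c1 = c2.
Proof. by move=> /eqP h1 /eqP h2; apply: val_inj; rewrite -h1 -h2. Qed.

Lemma cyc1_rival c r :
  (val r \in [:: 0; 3; 4])%N -> prefers r c (c - 1) -> ranks_first r c.
Proof. by case: c => [[|[|[|?]]] ?] //; case: r => [[|[|[|[|[|[|?]]]]]] ?]. Qed.

Lemma cyc2_rival c r :
  (val r \in [:: 1; 2; 5])%N -> prefers r c (c + 1) -> ranks_first r c.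
Proof. by case: c => [[|[|[|?]]] ?] //; case: r => [[|[|[|[|[|[|?]]]]]] ?]. Qed.

Section MajorityFirst.
Variables (R : realType) (n : nat).
Implicit Types (p : 'I_6 -> R) (prof : {ffun 'I_n -> 'I_6}) (c : 'I_3).

Definition weight p prof : R := \prod_(i < n) p (prof i).

Definition first_voters prof c : {set 'I_n} := [set i | ranks_first (prof i) c].

Definition majority_first prof c : bool := (n < 2 * #|first_voters prof c|)%N.

Definition Pmajority_first p c : R :=
  \sum_(prof | majority_first prof c) weight p prof.

Lemma majority_first_condorcet prof c :
  majority_first prof c -> condorcet_winner prof c.
Proof.
move=> maj; apply/forallP => d; apply/implyP => dc.
apply: (leq_trans maj); rewrite leq_mul2l /=; apply: subset_leq_card.
by apply/fintype.subsetP => i; rewrite !inE; apply: ranks_first_prefers.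
Qed.

Lemma majority_first_uniq prof c1 c2 :
  majority_first prof c1 -> majority_first prof c2 -> c1 = c2.
Proof.
move=> maj1 maj2; apply/eqP/negP => c12.
have disj : [disjoint first_voters prof c1 & first_voters prof c2].
  apply/pred0P => i /=; apply/negP => /andP[]; rewrite !inE => f1 f2.
  by move: c12; rewrite (ranks_first_inj f1 f2) eqxx.
have := max_card (first_voters prof c1 :|: first_voters prof c2).
rewrite card_ord cardsU (disjoint_setI0 disj) cards0 subn0.
by move: maj1 maj2; rewrite /majority_first; lia.
Qed.

Lemma sum_Pmajority_first p :
  \sum_c Pmajority_first p c =
  \sum_prof (if [exists c, majority_first prof c] then weight p prof else 0).
Proof.
rewrite /Pmajority_first; under eq_bigr do rewrite big_mkcond.
rewrite exchange_big /=; apply: eq_bigr => prof _.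
case: existsP => [[c0 maj0]|nomaj]; last first.
  by rewrite big1 // => c _; case: ifP => // maj; case: nomaj; exists c.
rewrite (bigD1 c0) //= maj0 big1 ?addr0 // => c /negPf c0c.
by case: ifP => // maj; move: c0c; rewrite (majority_first_uniq maj maj0) eqxx.
Qed.

Lemma sum_Pmajority_first_le_PCW p :
  (forall r, 0 <= p r) -> \sum_c Pmajority_first p c <= PCW n p.
Proof.
move=> p_ge0; rewrite sum_Pmajority_first /PCW [X in _ <= X]big_mkcond /=.
apply: ler_sum => prof _; case: existsP => [[c maj]|_].
  suff -> : has_condorcet_winner prof by [].
  by apply/existsP; exists c; apply: majority_first_condorcet.
by case: ifP => // _; apply: prodr_ge0 => i _.
Qed.

(* When every ranking in the support of [p] places [c] above [rival c] only if
   it places [c] first, a Condorcet winner must be ranked first by a majority. *)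
Lemma PCW_eq_sum_Pmajority_first p (supp : pred 'I_6) (rival : 'I_3 -> 'I_3) :
  (forall c, rival c != c) ->
  (forall c r, supp r -> prefers r c (rival c) -> ranks_first r c) ->
  (forall r, ~~ supp r -> p r = 0) ->
  PCW n p = \sum_c Pmajority_first p c.
Proof.
move=> rival_neq rivalP p_supp.
rewrite sum_Pmajority_first /PCW big_mkcond /=; apply: eq_bigr => prof _.
have [w0|w_neq0] := eqVneq (weight p prof) 0.
  by rewrite /weight in w0 *; rewrite w0; do 2!case: ifP.
have in_supp i : supp (prof i).
  apply/negPn/negP => /p_supp pi0.
  by move: w_neq0; rewrite /weight (bigD1 i) //= pi0 mul0r eqxx.
case: existsP => [[c maj]|nomaj].
  suff -> : has_condorcet_winner prof by [].
  by apply/existsP; exists c; apply: majority_first_condorcet.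
case: ifP => // /existsP[c /forallP/(_ (rival c))].
rewrite rival_neq /= => maj_pref; case: nomaj; exists c.
apply: (leq_trans maj_pref); rewrite leq_mul2l /=.
apply: subset_leq_card; apply/fintype.subsetP => i; rewrite !inE.
exact: rivalP.
Qed.

End MajorityFirst.

Section CountingByCardinality.
Variables (R : comPzRingType) (I : finType).

Lemma prod_if_in (A : {set I}) (a b : R) :
  \prod_i (if i \in A then a else b) = a ^+ #|A| * b ^+ (#|I| - #|A|).
Proof.
rewrite (bigID (mem A)) /= (eq_bigr (fun=> a)); last by move=> i ->.
rewrite [X in _ * X](eq_bigr (fun=> b)); last by move=> i /negPf ->.
by rewrite !prodr_const -(cardC A) addKn.
Qed.

Lemma sum_set_by_card (G : nat -> R) :
  \sum_(A : {set I}) G #|A| = \sum_(0 <= j < #|I|.+1) 'C(#|I|, j)%:R * G j.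
Proof.
have card_le (A : {set I}) : (#|A| < #|I|.+1)%N by rewrite ltnS max_card.
rewrite big_mkord (partition_big (fun A : {set I} => Ordinal (card_le A)) predT) //=.
apply: eq_bigr => j _; rewrite (eq_bigr (fun=> G j)); last by move=> A /eqP <-.
rewrite sumr_const -card_draws mulr_natl; congr (_ *+ _); apply: eq_card => A.
by rewrite inE.
Qed.

End CountingByCardinality.

Lemma binomB_at0 (R : realType) k n : binomB k n (0 : R) = 1.
Proof.
rewrite /binomB big_ord_recl /= expr0 bin0 subr0 expr1n !mulr1 big1 ?addr0 // => j _.
by rewrite expr0n /= mulr0 mul0r.
Qed.

Lemma binomial_upper_tail (R : realType) (n k : nat) (t : R) : (k <= n)%N ->
  \sum_(0 <= j < n.+1 | (k < j)%N) 'C(n, j)%:R * t ^+ j * (1 - t) ^+ (n - j) =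
  1 - binomB k n t.
Proof.
move=> kn; set b := fun j => 'C(n, j)%:R * t ^+ j * (1 - t) ^+ (n - j).
have total : \sum_(0 <= j < n.+1) b j = 1.
  rewrite -(expr1n _ n) -[1 in RHS](subrK t) exprDn big_mkord.
  by apply: eq_bigr => j _; rewrite /b -mulr_natl; ring.
rewrite /binomB -(big_mkord xpredT b) (big_nat_widen _ _ n.+1) //.
rewrite -[X in _ = X - _]total [X in _ = X - _](bigID (fun j => k < j)%N) /=.
rewrite [X in _ - X](eq_bigl (fun j => ~~ (k < j)%N)) ?addrK // => j.
by rewrite ltnS leqNgt.
Qed.

Definition first_mass (R : realType) (p : 'I_6 -> R) (c : 'I_3) : R :=
  \sum_(r | ranks_first r c) p r.

Lemma sum_first_mass (R : realType) (p : 'I_6 -> R) :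
  \sum_(c < 3) first_mass p c = \sum_r p r.
Proof.
have top_lt (r : 'I_6) : ((val r)./2 < 3)%N.
  by rewrite ltn_half_double; exact: ltn_ord.
by rewrite [RHS](partition_big (fun r => Ordinal (top_lt r)) predT).
Qed.


Lemma Pmajority_first_binomial (R : realType) n (p : 'I_6 -> R) c :
  \sum_r p r = 1 -> Pmajority_first n p c = 1 - binomB n./2 n (first_mass p c).
Proof.
move=> p1; set t := first_mass p c.
have voter_mass (A : {set 'I_n}) i :
    \sum_(r | ranks_first r c == (i \in A)) p r = if i \in A then t else 1 - t.
  case: (i \in A); first by apply: eq_bigl => r; rewrite eqb_id.
  rewrite -p1 [X in _ = X - _](bigID (ranks_first ^~ c)) /= addrAC subrr add0r.
  by apply: eq_bigl => r; rewrite eqbF_neg.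
have weight_by_voters (A : {set 'I_n}) :
    \sum_(prof | first_voters prof c == A) weight p prof =
    t ^+ #|A| * (1 - t) ^+ (n - #|A|).
  rewrite -[n in (n - _)%N]card_ord -prod_if_in.
  rewrite -(eq_bigr _ (fun i _ => voter_mass A i)).
  rewrite bigA_distr_big_dep; apply: eq_bigl => prof /=.
  apply/eqP/familyP => [<- i | H]; first by rewrite unfold_in inE.
  by apply/setP => i; have := H i; rewrite unfold_in inE => /eqP.
have half_le : (n./2 <= n)%N by rewrite leq_half_double -addnn; lia.
rewrite -(binomial_upper_tail _ half_le) /Pmajority_first big_mkcond /=.
rewrite (partition_big (fun prof => first_voters prof c) predT) //=.
transitivity (\sum_(A : {set 'I_n})
    if (n./2 < #|A|)%N then t ^+ #|A| * (1 - t) ^+ (n - #|A|) else 0).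
  apply: eq_bigr => A _.
  rewrite (eq_bigr (fun prof => if (n./2 < #|A|)%N then weight p prof else 0)).
    by case: ifP => _; [apply: weight_by_voters | rewrite big1].
  by move=> prof /eqP <-; rewrite /majority_first ltn_half_double -mul2n.
rewrite (sum_set_by_card _
  (fun j => if (n./2 < j)%N then t ^+ j * (1 - t) ^+ (n - j) else 0)).
rewrite card_ord [RHS]big_mkcond /=.
by apply: eq_bigr => j _; case: ifP; rewrite ?mulr0 ?mulrA.
Qed.

Section BetaPolynomials.
Variable R : realType.

Definition beta_poly (a b : nat) : {poly R} := 'X^a * (1 - 'X) ^+ b.

Lemma horner_beta_poly a b t : (beta_poly a b).[t] = t ^+ a * (1 - t) ^+ b.
Proof. by rewrite /beta_poly !hornerE. Qed.

Lemma deriv_beta_poly a b :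
  (beta_poly a b)^`() = a%:R *: beta_poly a.-1 b - b%:R *: beta_poly a b.-1.
Proof.
rewrite /beta_poly derivM derivXn deriv_exp derivB derivX -polyC1 derivC !scaler_nat.
ring.
Qed.

Definition binomB_poly (n K : nat) : {poly R} :=
  \sum_(j < K.+1) 'C(n, j)%:R *: beta_poly j (n - j).

Lemma horner_binomB_poly n K t : (binomB_poly n K).[t] = binomB K n t.
Proof.
rewrite /binomB_poly horner_sum; apply: eq_bigr => j _.
by rewrite hornerZ horner_beta_poly mulrA.
Qed.

(* The sum telescopes, by [mul_bin_diag] and [mul_bin_down]. *)
Lemma deriv_binomB_poly n K : (K < n)%N ->
  (binomB_poly n K)^`() = - (n * 'C(n.-1, K))%:R *: beta_poly K (n.-1 - K).
Proof.
elim: K => [|K IH] Kn.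
  rewrite /binomB_poly big_ord1 derivZ deriv_beta_poly !bin0 muln1 !subn0.
  by rewrite scale1r scale0r sub0r /beta_poly !expr0 !mul1r scaleNr.
rewrite /binomB_poly big_ord_recr /= -/(binomB_poly n K) derivD IH 1?ltnW //.
rewrite derivZ deriv_beta_poly.
have [e ->] : exists e, n = (K + 2 + e)%N by exists (n - K - 2)%N; lia.
have diag : ((K + 2 + e) * 'C((K + 2 + e).-1, K) = 'C(K + 2 + e, K.+1) * K.+1)%N.
  by rewrite mul_bin_diag mulnC.
have down : ((K + 2 + e) * 'C((K + 2 + e).-1, K.+1) = 'C(K + 2 + e, K.+1) * e.+1)%N.
  by rewrite mul_bin_down mulnC; congr (_ * _)%N; lia.
rewrite diag down.
have -> : ((K + 2 + e).-1 - K = e.+1)%N by lia.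
have -> : (K + 2 + e - K.+1 = e.+1)%N by lia.
have -> : ((K + 2 + e).-1 - K.+1 = e)%N by lia.
rewrite /beta_poly /= !natrM !exprS -!mul_polyC !polyCN !polyCM.
ring.
Qed.

Lemma beta_poly_le k m a b : (m <= k)%N -> 0 <= a -> a <= b -> b <= 1 ->
  a * (1 - a) <= b * (1 - b) -> (beta_poly k m).[a] <= (beta_poly k m).[b].
Proof.
move=> mk a0 ab b1 ab1.
have split_beta t : (beta_poly k m).[t] = t ^+ (k - m) * (t * (1 - t)) ^+ m.
  by rewrite horner_beta_poly exprMn mulrA -exprD subnK.
have b0 : 0 <= b by apply: le_trans ab.
have a1 : 0 <= a * (1 - a) by apply: mulr_ge0 => //; lra.
rewrite !split_beta; apply: ler_pM; rewrite ?exprn_ge0 ?lerXn2r ?nnegrE //.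
exact: le_trans ab1.
Qed.

End BetaPolynomials.

Lemma poly_MVT (R : realType) (P : {poly R}) (a b : R) : a <= b ->
  exists2 x, a <= x <= b & P.[b] - P.[a] = P^`().[x] * (b - a).
Proof.
move=> ab; have [|x xab ->] := @MVT_segment R (horner P) (horner P^`()) a b ab.
  by apply: continuous_subspaceT; exact: continuous_horner.
by exists x; first by move: xab; rewrite in_itv.
Qed.

Section BetaAntiderivative.
Variables (R : realType) (k m : nat) (c : R) (F : {poly R}).
Hypotheses (mk : (m <= k)%N) (c_ge0 : 0 <= c) (dF : F^`() = c *: beta_poly R k m).
Local Notation beta t := (beta_poly R k m).[t].

Lemma MVT_beta a b : a <= b ->
  exists2 x, a <= x <= b & F.[b] - F.[a] = c * beta x * (b - a).
Proof.
by move=> ab; have [x xab ->] := poly_MVT F ab; exists x; rewrite // dF hornerZ.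
Qed.

Lemma midpoint_convex_beta x y : 0 <= x -> 0 <= y -> x <= 2^-1 -> y <= 2^-1 ->
  2 * F.[(x + y) / 2] <= F.[x] + F.[y].
Proof.
wlog xy : x y / x <= y => [wlog_xy x0 y0 x_half y_half|x0 _ _ y_half].
  have [xy|/ltW yx] := leP x y; first exact: wlog_xy.
  by rewrite addrC [F.[x] + _]addrC; apply: wlog_xy.
set z := (x + y) / 2.
have xz : x <= z by rewrite /z; lra.
have zy : z <= y by rewrite /z; lra.
have [u /andP[xu uz] Fzx] := MVT_beta xz.
have [v /andP[zv vy] Fyz] := MVT_beta zy.
have beta_uv : beta u <= beta v.
  have uv_sq : 0 <= (v - u) * (1 - u - v) by apply: mulr_ge0; lra.
  by apply: beta_poly_le => //; lra.
have : 0 <= c * (beta v - beta u) * (z - x).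
  by rewrite mulr_ge0 ?mulr_ge0 // subr_ge0.
have yzx : y - z = z - x by rewrite /z; lra.
by rewrite yzx in Fyz; nra.
Qed.

(* [F s + 2 F ((1 - s) / 2)] is nondecreasing on [[1/3, 1]]: its derivative is
   [c (beta s - beta ((1 - s) / 2))]. *)
Lemma three_at_third_le_split s : 3^-1 <= s -> s <= 1 ->
  3 * F.[3^-1] <= F.[s] + 2 * F.[(1 - s) / 2].
Proof.
move=> s_third s1.
pose q : {poly R} := (2^-1)%:P * (1 - 'X).
have hornerq t : q.[t] = (1 - t) / 2 by rewrite /q !hornerE mulrC.
pose H := F + 2%:P * (F \Po q).
have hornerH t : H.[t] = F.[t] + 2 * F.[(1 - t) / 2].
  by rewrite /H hornerD hornerM hornerC horner_comp hornerq.
have dH t : H^`().[t] = c * (beta t - beta ((1 - t) / 2)).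
  have dq : q^`() = - (2^-1)%:P.
    by rewrite /q deriv_mulC derivB derivC derivX sub0r mulrN1 -polyCN.
  rewrite /H derivD deriv_mulC deriv_comp dq dF hornerD hornerZ hornerCM.
  rewrite [((_ \Po q) * _).[t]]hornerM horner_comp hornerZ hornerN hornerC hornerq.
  by field.
have [x /andP[x_third xs]] := poly_MVT H s_third.
rewrite !hornerH dH (_ : (1 - 3^-1) / 2 = 3^-1); last by field.
have x_sq : 0 <= (1 - x) * (3 * x - 1) by apply: mulr_ge0; lra.
have beta_x : beta ((1 - x) / 2) <= beta x by apply: beta_poly_le => //; lra.
have : 0 <= c * (beta x - beta ((1 - x) / 2)) * (s - 3^-1).
  by rewrite mulr_ge0 ?mulr_ge0 // subr_ge0.
lra.
Qed.

Lemma three_at_third_le_sum a b d : 0 <= a -> 0 <= b -> 0 <= d -> a + b + d = 1 ->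
  3 * F.[3^-1] <= F.[a] + F.[b] + F.[d].
Proof.
have max_case x y z : 0 <= y -> 0 <= z -> x + y + z = 1 -> y <= x -> z <= x ->
    3 * F.[3^-1] <= F.[x] + F.[y] + F.[z].
  move=> y0 z0 xyz yx zx.
  have := three_at_third_le_split (_ : 3^-1 <= x) (_ : x <= 1).
  have := midpoint_convex_beta y0 z0 (_ : y <= 2^-1) (_ : z <= 2^-1).
  rewrite (_ : (y + z) / 2 = (1 - x) / 2); lra.
move=> a0 b0 d0 abd.
have [ba|ab] := leP b a; [have [da|ad] := leP d a | have [db|bd] := leP d b].
- exact: max_case.
- by have := max_case d a b; lra.
- by have := max_case b a d; lra.
- by have := max_case d a b; lra.
Qed.

End BetaAntiderivative.

Lemma Rintegral_deriv_poly (R : realType) (P : {poly R}) (a b : R) : a < b ->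
  Rintegral lebesgue_measure `[a, b]%classic (horner P^`()) = P.[b] - P.[a].
Proof.
move=> ab; rewrite /Rintegral (@continuous_FTC2 R _ (horner P)) //.
- by apply: continuous_subspaceT; exact: continuous_horner.
- split=> [x _||]; first exact: derivable_horner.
  + by apply: cvg_at_right_filter; exact: continuous_horner.
  + by apply: cvg_at_left_filter; exact: continuous_horner.
- by move=> x _; rewrite -derivE.
Qed.

Lemma half_tail_le n : (n - n./2 - 1 <= n./2)%N.
Proof. by have := odd_double_half n; case: (odd n) => /=; lia. Qed.

Section MajorityTail.
Variables (R : realType) (n : nat).
Hypothesis n_gt0 : (0 < n)%N.
Local Notation k := n./2.
Local Notation m := (n - n./2 - 1)%N.

Definition majority_tail_poly : {poly R} := 1 - binomB_poly R n k.
Definition majority_tail_const : R := (n * 'C(n.-1, k))%:R.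

Lemma horner_majority_tail_poly t : majority_tail_poly.[t] = 1 - binomB k n t.
Proof. by rewrite /majority_tail_poly hornerD hornerN hornerC horner_binomB_poly. Qed.

Lemma half_lt : (k < n)%N.
Proof. by move: n_gt0; rewrite ltn_half_double -addnn; lia. Qed.

Lemma majority_tail_const_gt0 : 0 < majority_tail_const.
Proof. by rewrite ltr0n muln_gt0 n_gt0 bin_gt0 -ltnS prednK // half_lt. Qed.

Lemma deriv_majority_tail_poly :
  majority_tail_poly^`() = majority_tail_const *: beta_poly R k m.
Proof.
rewrite /majority_tail_poly derivB -polyC1 derivC sub0r deriv_binomB_poly ?half_lt //.
by rewrite scaleNr opprK; congr (_ *: beta_poly _ _ _); lia.
Qed.

End MajorityTail.

Lemma sum_Pmajority_first_ge_uniform (R : realType) n (p : 'I_6 -> R) : (0 < n)%N ->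
  is_prob_vector p ->
  3 * (1 - binomB n./2 n 3^-1) <= \sum_c Pmajority_first n p c.
Proof.
move=> n_gt0 [p_ge0 p1].
have mass_ge0 c : 0 <= first_mass p c by apply: sumr_ge0.
have : \sum_(c < 3) first_mass p c = 1 by rewrite sum_first_mass.
rewrite !big_ord_recr !big_ord0 /= !add0r !Pmajority_first_binomial // => mass1.
rewrite -!horner_majority_tail_poly.
have c_ge0 := ltW (majority_tail_const_gt0 R n_gt0).
exact: (three_at_third_le_sum (half_tail_le n) c_ge0
  (deriv_majority_tail_poly R n_gt0)).
Qed.

Lemma sum_Pmajority_first_uniform (R : realType) n (p : 'I_6 -> R) :
  \sum_r p r = 1 -> (forall c, first_mass p c = 3^-1) ->
  \sum_c Pmajority_first n p c = 3 * (1 - binomB n./2 n 3^-1).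
Proof.
move=> p1 mass_third; under eq_bigr do rewrite Pmajority_first_binomial // mass_third.
by rewrite sumr_const card_ord mulr_natl.
Qed.

Section CyclicProfiles.
Variable R : realType.

Lemma sum_p_cyc1 : \sum_r p_cyc1 R r = 1.
Proof. by rewrite !big_ord_recr big_ord0 /= /p_cyc1 /=; lra. Qed.

Lemma sum_p_cyc2 : \sum_r p_cyc2 R r = 1.
Proof. by rewrite !big_ord_recr big_ord0 /= /p_cyc2 /=; lra. Qed.

Lemma first_mass_p_cyc1 c : first_mass (p_cyc1 R) c = 3^-1.
Proof.
rewrite /first_mass big_mkcond /= !big_ord_recr big_ord0 /= /p_cyc1 /=.
by case: c => [[|[|[|?]]] ?] //; rewrite /ranks_first /=; lra.
Qed.

Lemma first_mass_p_cyc2 c : first_mass (p_cyc2 R) c = 3^-1.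
Proof.
rewrite /first_mass big_mkcond /= !big_ord_recr big_ord0 /= /p_cyc2 /=.
by case: c => [[|[|[|?]]] ?] //; rewrite /ranks_first /=; lra.
Qed.

Lemma PCW_p_cyc1 n : PCW n (p_cyc1 R) = \sum_c Pmajority_first n (p_cyc1 R) c.
Proof.
apply: (PCW_eq_sum_Pmajority_first n (supp := fun r => val r \in [:: 0; 3; 4]%N)
  (rival := fun c => c - 1) _ cyc1_rival).
- by case=> [[|[|[|?]]] ?].
- by move=> r; rewrite /p_cyc1 => /negPf ->.
Qed.

Lemma PCW_p_cyc2 n : PCW n (p_cyc2 R) = \sum_c Pmajority_first n (p_cyc2 R) c.
Proof.
apply: (PCW_eq_sum_Pmajority_first n (supp := fun r => val r \in [:: 1; 2; 5]%N)
  (rival := fun c => c + 1) _ cyc2_rival).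
- by case=> [[|[|[|?]]] ?].
- by move=> r; rewrite /p_cyc2 => /negPf ->.
Qed.

End CyclicProfiles.

Theorem mainTheorem9 (R : realType) (n : nat) (hn : (1 <= n)%N) :
  let k := n./2 in
  let bound : R := 3 * (1 - binomB k n (3^-1 : R)) in
  (forall p : 'I_6 -> R, is_prob_vector p -> bound <= PCW n p) /\
  bound = 3 * n%:R * ('C(n.-1, k))%:R *
          Rintegral (@lebesgue_measure R) `[0, 3^-1]%classic
            (fun t : R => t ^+ k * (1 - t) ^+ (n - k - 1)) /\
  PCW n (@p_cyc1 R) = bound /\
  PCW n (@p_cyc2 R) = bound.
Proof.
move=> k bound; split; [|split; [|split]].
- move=> p [p_ge0 p1]; apply: le_trans (sum_Pmajority_first_le_PCW n p_ge0).
  exact: sum_Pmajority_first_ge_uniform.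
- pose F := (majority_tail_const R n)^-1 *: majority_tail_poly R n.
  have c_neq0 := lt0r_neq0 (majority_tail_const_gt0 R hn).
  have dF : F^`() = beta_poly R k (n - k - 1).
    by rewrite derivZ deriv_majority_tail_poly // scalerA mulVf ?scale1r.
  have beta_fun : (fun t : R => t ^+ k * (1 - t) ^+ (n - k - 1)) = horner F^`().
    by apply/funext => t; rewrite dF horner_beta_poly.
  rewrite beta_fun Rintegral_deriv_poly ?invr_gt0 ?ltr0n // !hornerZ.
  rewrite !horner_majority_tail_poly binomB_at0 subrr mulr0 subr0.
  rewrite /bound /majority_tail_const natrM; field.
  by move: c_neq0; rewrite /majority_tail_const natrM mulf_eq0 negb_or andbC.
- rewrite PCW_p_cyc1 sum_Pmajority_first_uniform ?sum_p_cyc1 //.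
  exact: first_mass_p_cyc1.
- rewrite PCW_p_cyc2 sum_Pmajority_first_uniform ?sum_p_cyc2 //.
  exact: first_mass_p_cyc2.
Qed.
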